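(* Let $S: x=x(u,v)$, $(u,v)\in\mathcal D$, be a strongly regular Weingarten surface parameterized by principal parameters, with $\nu_1=f(\nu)$, $\nu_2=g(\nu)$, $\nu=\nu(u,v)$. Let $\Phi$ be an antiderivative of $f'/(f-g)$ and $\Psi$ an antiderivative of $g'/(g-f)$ on $\mathcal I$. Then the function $\lambda=\ln\{\sqrt E\,\exp(\Phi(\nu(u,v)))\}$ does not depend on $v$, and the function $\mu=\ln\{\sqrt G\,\exp(\Psi(\nu(u,v)))\}$ does not depend on $u$.
   Context: $E,F,G$ and $L,M,N$ are the coefficients of the first and second fundamental forms; principal parameters means $F=M=0$ and no umbilical points. Principal curvatures: $\nu_1=L/E$, $\nu_2=N/G$; principal geodesic curvatures: $\gamma_1=-\frac{E_v}{2E\sqrt G}$, $\gamma_2=\frac{G_u}{2G\sqrt E}$. $S$ is strongly regular if $(\nu_1-\nu_2)\gamma_1\gamma_2\neq0$ on $\mathcal D$, with the convention $\nu_1-\nu_2>0$. A strongly regular surface is Weingarten if there exist differentiable functions $f(\nu),g(\nu)$, $\nu\in\mathcal I\subseteq\mathbb R$, with $f-g>0$, $f'g'\neq0$, and a differentiable function $\nu(u,v)\in\mathcal I$ with $\nu_u\nu_v\neq0$ on $\mathcal D$, such that $\nu_1=f(\nu)$, $\nu_2=g(\nu)$. *)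

From Stdlib Require Import Reals.
From Coquelicot Require Import Coquelicot.
Open Scope R_scope.

Definition pu (f : R -> R -> R) : R -> R -> R := fun u v => Derive (fun t => f t v) u.
Definition pv (f : R -> R -> R) : R -> R -> R := fun u v => Derive (fun t => f u t) v.

Definition open2 (D : R -> R -> Prop) : Prop :=
  forall u v, D u v -> exists eps : R, 0 < eps /\
    forall a b, Rabs (a - u) < eps -> Rabs (b - v) < eps -> D a b.

Definition open_interval_R (I : R -> Prop) : Prop :=
  (exists t, I t) /\
  (forall t, I t -> exists eps : R, 0 < eps /\ forall s, Rabs (s - t) < eps -> I s) /\
  (forall a b c, I a -> I c -> a <= b -> b <= c -> I b).

Fixpoint Ck (k : nat) (D : R -> R -> Prop) (f : R -> R -> R) : Prop :=
  (forall u v, D u v -> continuous (fun p : R * R => f (fst p) (snd p)) (u, v)) /\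
  match k with
  | O => True
  | S k' =>
      (forall u v, D u v -> ex_derive (fun t => f t v) u /\ ex_derive (fun t => f u t) v) /\
      Ck k' D (pu f) /\ Ck k' D (pv f)
  end.

Definition smooth2 (D : R -> R -> Prop) (f : R -> R -> R) : Prop :=
  forall k, Ck k D f.

Definition vec3 := (R * R * R)%type.
Definition vx (a : vec3) : R := fst (fst a).
Definition vy (a : vec3) : R := snd (fst a).
Definition vz (a : vec3) : R := snd a.
Definition dot (a b : vec3) : R := vx a * vx b + vy a * vy b + vz a * vz b.
Definition cross (a b : vec3) : vec3 :=
  (vy a * vz b - vz a * vy b, vz a * vx b - vx a * vz b, vx a * vy b - vy a * vx b).
Definition vnorm (a : vec3) : R := sqrt (dot a a).
Definition vscale (c : R) (a : vec3) : vec3 := (c * vx a, c * vy a, c * vz a).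

Definition surf := R -> R -> vec3.
Definition comp1 (x : surf) : R -> R -> R := fun u v => vx (x u v).
Definition comp2 (x : surf) : R -> R -> R := fun u v => vy (x u v).
Definition comp3 (x : surf) : R -> R -> R := fun u v => vz (x u v).
Definition Su (x : surf) : surf := fun u v =>
  (pu (comp1 x) u v, pu (comp2 x) u v, pu (comp3 x) u v).
Definition Sv (x : surf) : surf := fun u v =>
  (pv (comp1 x) u v, pv (comp2 x) u v, pv (comp3 x) u v).

Definition smooth_surf (D : R -> R -> Prop) (x : surf) : Prop :=
  smooth2 D (comp1 x) /\ smooth2 D (comp2 x) /\ smooth2 D (comp3 x).

Definition regular_surf (D : R -> R -> Prop) (x : surf) : Prop :=
  forall u v, D u v -> vnorm (cross (Su x u v) (Sv x u v)) <> 0.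

Definition unormal (x : surf) : surf := fun u v =>
  vscale (/ vnorm (cross (Su x u v) (Sv x u v))) (cross (Su x u v) (Sv x u v)).

Definition fE (x : surf) u v := dot (Su x u v) (Su x u v).
Definition fF (x : surf) u v := dot (Su x u v) (Sv x u v).
Definition fG (x : surf) u v := dot (Sv x u v) (Sv x u v).
Definition fL (x : surf) u v := dot (Su (Su x) u v) (unormal x u v).
Definition fM (x : surf) u v := dot (Sv (Su x) u v) (unormal x u v).
Definition fN (x : surf) u v := dot (Sv (Sv x) u v) (unormal x u v).

Definition nu1 (x : surf) u v := fL x u v / fE x u v.
Definition nu2 (x : surf) u v := fN x u v / fG x u v.
Definition gamma1 (x : surf) u v := - pv (fE x) u v / (2 * fE x u v * sqrt (fG x u v)).
Definition gamma2 (x : surf) u v := pu (fG x) u v / (2 * fG x u v * sqrt (fE x u v)).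

Definition principal_params (D : R -> R -> Prop) (x : surf) : Prop :=
  forall u v, D u v -> fF x u v = 0 /\ fM x u v = 0 /\ nu1 x u v <> nu2 x u v.

(** Strongly regular (with the convention nu1 - nu2 > 0). *)
Definition strongly_regular (D : R -> R -> Prop) (x : surf) : Prop :=
  forall u v, D u v ->
    (nu1 x u v - nu2 x u v) * gamma1 x u v * gamma2 x u v <> 0 /\
    nu1 x u v - nu2 x u v > 0.

Definition weingarten_data (D : R -> R -> Prop) (I : R -> Prop) (x : surf)
    (f g : R -> R) (nu : R -> R -> R) : Prop :=
  (forall t, I t -> ex_derive f t /\ ex_derive g t /\
                    f t - g t > 0 /\ Derive f t * Derive g t <> 0) /\
  (forall u v, D u v ->
     I (nu u v) /\
     ex_derive (fun t => nu t v) u /\ ex_derive (fun t => nu u t) v /\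
     pu nu u v * pv nu u v <> 0 /\
     nu1 x u v = f (nu u v) /\ nu2 x u v = g (nu u v)).

From Stdlib Require Import Reals Lra.
From Coquelicot Require Import Coquelicot.
Open Scope R_scope.

(* In curvature-line coordinates (F = M = 0) the Codazzi equations read
   L_v = (E_v / 2) (L/E + N/G) and N_u = (G_u / 2) (L/E + N/G), that is
   (nu_1)_v = (nu_2 - nu_1) E_v / (2E) and (nu_2)_u = (nu_1 - nu_2) G_u / (2G).
   Substituting nu_1 = f(nu), nu_2 = g(nu) into the first gives
   E_v / (2E) = - nu_v f'(nu) / (f(nu) - g(nu)) = - (Phi o nu)_v, so
   ln sqrt E + Phi(nu) has zero v-derivative; symmetrically for mu, the second
   equation being the first one for the surface with u and v exchanged. *)

Lemma is_derive_eq (h : R -> R) (t l l' : R) : is_derive h t l -> l = l' -> is_derive h t l'.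
Proof. now intros H <-. Qed.

(* Coquelicot's generic [is_derive_plus]/[is_derive_mult] do not unify with [Rplus]/[Rmult]. *)
Lemma is_derive_Rmult (h k : R -> R) (t dh dk : R) :
  is_derive h t dh -> is_derive k t dk ->
  is_derive (fun s => h s * k s) t (dh * k t + h t * dk).
Proof. intros Hh Hk. exact (is_derive_mult h k t dh dk Hh Hk Rmult_comm). Qed.

Lemma is_derive_Rplus (h k : R -> R) (t dh dk : R) :
  is_derive h t dh -> is_derive k t dk -> is_derive (fun s => h s + k s) t (dh + dk).
Proof. exact (is_derive_plus h k t dh dk). Qed.

Lemma is_derive_Rminus (h k : R -> R) (t dh dk : R) :
  is_derive h t dh -> is_derive k t dk -> is_derive (fun s => h s - k s) t (dh - dk).
Proof. exact (is_derive_minus h k t dh dk). Qed.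

Lemma is_derive_locally_const (h : R -> R) (t l c : R) :
  is_derive h t l -> locally t (fun s => h s = c) -> l = 0.
Proof.
  intros Hh Hc.
  assert (H0 : is_derive h t 0).
  { apply (is_derive_ext_loc (fun _ => c)).
    - revert Hc; apply filter_imp; intros s Hs; now rewrite Hs.
    - exact (is_derive_const (V := R_NormedModule) c t). }
  rewrite <- (is_derive_unique _ _ _ Hh); exact (is_derive_unique _ _ _ H0).
Qed.

Definition is_vderive (p : R -> vec3) (t : R) (dp : vec3) : Prop :=
  is_derive (fun s => vx (p s)) t (vx dp) /\ is_derive (fun s => vy (p s)) t (vy dp) /\
  is_derive (fun s => vz (p s)) t (vz dp).

Lemma is_vderive_dot (p q : R -> vec3) (t : R) (dp dq : vec3) :
  is_vderive p t dp -> is_vderive q t dq ->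
  is_derive (fun s => dot (p s) (q s)) t (dot dp (q t) + dot (p t) dq).
Proof.
  intros [P1 [P2 P3]] [Q1 [Q2 Q3]]; unfold dot.
  eapply is_derive_eq.
  - apply is_derive_Rplus; [apply is_derive_Rplus|]; apply is_derive_Rmult; eassumption.
  - cbv beta; ring.
Qed.

Lemma ex_vderive_cross (p q : R -> vec3) (t : R) (dp dq : vec3) :
  is_vderive p t dp -> is_vderive q t dq ->
  exists dc, is_vderive (fun s => cross (p s) (q s)) t dc.
Proof.
  intros [P1 [P2 P3]] [Q1 [Q2 Q3]].
  refine (ex_intro _ (_, _, _) _); unfold is_vderive; simpl.
  split; [|split]; apply is_derive_Rminus; apply is_derive_Rmult; eassumption.
Qed.

Lemma dot_self_pos (c : vec3) : vnorm c <> 0 -> 0 < dot c c.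
Proof.
  intros Hn; destruct (Rle_lt_dec (dot c c) 0) as [Hle|Hlt]; [|exact Hlt].
  exfalso; apply Hn, sqrt_neg_0, Hle.
Qed.

Lemma ex_vderive_normalize (c : R -> vec3) (t : R) (dc : vec3) :
  is_vderive c t dc -> vnorm (c t) <> 0 ->
  exists dn, is_vderive (fun s => vscale (/ vnorm (c s)) (c s)) t dn.
Proof.
  intros Hc Hn.
  assert (Hsqrt := is_derive_sqrt _ _ _ (is_vderive_dot _ _ _ _ _ Hc Hc) (dot_self_pos _ Hn)).
  assert (Hinv := is_derive_inv _ _ _ Hsqrt Hn).
  destruct Hc as [C1 [C2 C3]].
  refine (ex_intro _ (_, _, _) _); unfold is_vderive, vscale; simpl.
  split; [|split]; apply is_derive_Rmult; eassumption.
Qed.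

Definition unit_normal (a b : vec3) : vec3 := vscale (/ vnorm (cross a b)) (cross a b).

Lemma ex_vderive_unit_normal (p q : R -> vec3) (t : R) (dp dq : vec3) :
  is_vderive p t dp -> is_vderive q t dq -> vnorm (cross (p t) (q t)) <> 0 ->
  exists dn, is_vderive (fun s => unit_normal (p s) (q s)) t dn.
Proof.
  intros Hp Hq Hn.
  destruct (ex_vderive_cross _ _ _ _ _ Hp Hq) as [dc Hc].
  exact (ex_vderive_normalize _ _ _ Hc Hn).
Qed.

Lemma dot_comm (a b : vec3) : dot a b = dot b a.
Proof. unfold dot; ring. Qed.

Lemma vnorm_cross_comm (a b : vec3) : vnorm (cross b a) = vnorm (cross a b).
Proof.
  unfold vnorm; f_equal.
  destruct a as [[a1 a2] a3], b as [[b1 b2] b3]; unfold dot, cross, vx, vy, vz; simpl; ring.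
Qed.

Lemma dot_self_pos_of_cross (a b : vec3) : vnorm (cross a b) <> 0 -> 0 < dot a a.
Proof.
  intros H.
  destruct (Rle_lt_dec (dot a a) 0) as [Ha|Ha]; [exfalso|exact Ha].
  apply H; destruct a as [[a1 a2] a3], b as [[b1 b2] b3].
  unfold vnorm, dot, cross, vx, vy, vz in *; simpl in *.
  assert (a1 = 0) by nra; assert (a2 = 0) by nra; assert (a3 = 0) by nra; subst.
  replace (_ + _ + _) with 0 by ring; exact sqrt_0.
Qed.

Lemma dot_unit_normal (w a b : vec3) :
  dot w (unit_normal a b) = / vnorm (cross a b) * dot w (cross a b).
Proof.
  unfold unit_normal; set (k := / vnorm (cross a b)).
  destruct (cross a b) as [[c1 c2] c3], w as [[w1 w2] w3].
  unfold dot, vscale, vx, vy, vz; simpl; ring.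
Qed.

Lemma unit_normal_orthl (a b : vec3) : dot (unit_normal a b) a = 0.
Proof.
  rewrite dot_comm, dot_unit_normal.
  destruct a as [[a1 a2] a3], b as [[b1 b2] b3]; unfold dot, cross, vx, vy, vz; simpl; ring.
Qed.

Lemma unit_normal_orthr (a b : vec3) : dot (unit_normal a b) b = 0.
Proof.
  rewrite dot_comm, dot_unit_normal.
  destruct a as [[a1 a2] a3], b as [[b1 b2] b3]; unfold dot, cross, vx, vy, vz; simpl; ring.
Qed.

Lemma unit_normal_unit (a b : vec3) :
  vnorm (cross a b) <> 0 -> dot (unit_normal a b) (unit_normal a b) = 1.
Proof.
  intros H.
  assert (Hs : vnorm (cross a b) * vnorm (cross a b) = dot (cross a b) (cross a b)).
  { apply sqrt_sqrt; left; exact (dot_self_pos _ H). }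
  rewrite dot_unit_normal, dot_comm, dot_unit_normal, <- Hs; field; exact H.
Qed.

Lemma dot_unit_normal_comm (w a b : vec3) : dot w (unit_normal b a) = - dot w (unit_normal a b).
Proof.
  rewrite !dot_unit_normal, vnorm_cross_comm; set (k := / vnorm (cross a b)).
  destruct a as [[a1 a2] a3], b as [[b1 b2] b3], w as [[w1 w2] w3].
  unfold dot, cross, vx, vy, vz; simpl; ring.
Qed.

Lemma unit_normal_vderive (p q : R -> vec3) (t : R) (dp dq dn : vec3) :
  is_vderive p t dp -> is_vderive q t dq ->
  is_vderive (fun s => unit_normal (p s) (q s)) t dn ->
  locally t (fun s => vnorm (cross (p s) (q s)) <> 0) ->
  dot dn (unit_normal (p t) (q t)) = 0 /\
  dot dn (p t) = - dot (unit_normal (p t) (q t)) dp /\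
  dot dn (q t) = - dot (unit_normal (p t) (q t)) dq.
Proof.
  intros Hp Hq Hn Hreg.
  assert (Hnn := is_derive_locally_const _ _ _ 1 (is_vderive_dot _ _ _ _ _ Hn Hn)).
  assert (Hnp := is_derive_locally_const _ _ _ 0 (is_vderive_dot _ _ _ _ _ Hn Hp)).
  assert (Hnq := is_derive_locally_const _ _ _ 0 (is_vderive_dot _ _ _ _ _ Hn Hq)).
  cbv beta in Hnn, Hnp, Hnq; rewrite (dot_comm (unit_normal (p t) (q t)) dn) in Hnn.
  repeat split.
  - enough (2 * dot dn (unit_normal (p t) (q t)) = 0) by lra.
    rewrite <- Hnn; [ring|].
    revert Hreg; apply filter_imp; intros s Hs; exact (unit_normal_unit _ _ Hs).
  - enough (dot dn (p t) + dot (unit_normal (p t) (q t)) dp = 0) by lra.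
    apply Hnp, filter_forall; intros; apply unit_normal_orthl.
  - enough (dot dn (q t) + dot (unit_normal (p t) (q t)) dq = 0) by lra.
    apply Hnq, filter_forall; intros; apply unit_normal_orthr.
Qed.

Lemma dot_self_eq0 (a : vec3) : dot a a = 0 -> forall z, dot a z = 0.
Proof.
  destruct a as [[a1 a2] a3]; unfold dot, vx, vy, vz; simpl; intros Ha z.
  assert (a1 * a1 = 0) by nra; assert (a2 * a2 = 0) by nra; assert (a3 * a3 = 0) by nra.
  replace a1 with 0 by nra; replace a2 with 0 by nra; replace a3 with 0 by nra; ring.
Qed.

(* Lagrange's identity |a|^2 |c|^2 = (a.c)^2 + |a x c|^2, where a x (p x q) = (a.q) p - (a.p) q. *)
Lemma orthogonal_frame_null (a p q : vec3) :
  0 < dot (cross p q) (cross p q) ->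
  dot a p = 0 -> dot a q = 0 -> dot a (cross p q) = 0 -> dot a a = 0.
Proof.
  destruct a as [[a1 a2] a3], p as [[p1 p2] p3], q as [[q1 q2] q3].
  unfold dot, cross, vx, vy, vz; simpl; intros Hc Hp Hq Hpq.
  set (c1 := p2 * q3 - p3 * q2) in *; set (c2 := p3 * q1 - p1 * q3) in *;
    set (c3 := p1 * q2 - p2 * q1) in *.
  assert (Lagrange : (a1 * a1 + a2 * a2 + a3 * a3) * (c1 * c1 + c2 * c2 + c3 * c3) =
    (a1 * c1 + a2 * c2 + a3 * c3) ^ 2
    + (p1 * (a1 * q1 + a2 * q2 + a3 * q3) - q1 * (a1 * p1 + a2 * p2 + a3 * p3)) ^ 2
    + (p2 * (a1 * q1 + a2 * q2 + a3 * q3) - q2 * (a1 * p1 + a2 * p2 + a3 * p3)) ^ 2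
    + (p3 * (a1 * q1 + a2 * q2 + a3 * q3) - q3 * (a1 * p1 + a2 * p2 + a3 * p3)) ^ 2)
    by (unfold c1, c2, c3; ring).
  rewrite Hp, Hq, Hpq in Lagrange.
  apply (Rmult_eq_reg_r (c1 * c1 + c2 * c2 + c3 * c3)); [rewrite Lagrange; ring | lra].
Qed.

Lemma dot_tangent_orthogonal (w p q z : vec3) :
  vnorm (cross p q) <> 0 -> dot p q = 0 ->
  dot w p = 0 -> dot w (unit_normal p q) = 0 ->
  dot w z = dot w q / dot q q * dot q z.
Proof.
  intros Hn Hpq Hwp Hwn.
  assert (Hc := dot_self_pos _ Hn).
  assert (Hq : 0 < dot q q).
  { apply (dot_self_pos_of_cross q p); rewrite vnorm_cross_comm; exact Hn. }
  assert (Hwc : dot w (cross p q) = 0).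
  { rewrite dot_unit_normal in Hwn.
    apply (Rmult_eq_reg_l (/ vnorm (cross p q))); [lra | apply Rinv_neq_0_compat, Hn]. }
  set (k := dot w q / dot q q).
  set (a := (vx w - k * vx q, vy w - k * vy q, vz w - k * vz q)).
  assert (Ha : dot a a = 0).
  { apply (orthogonal_frame_null a p q Hc).
    - transitivity (dot w p - k * dot p q); [|rewrite Hwp, Hpq; ring].
      destruct w as [[w1 w2] w3], p as [[p1 p2] p3], q as [[q1 q2] q3].
      unfold a, dot, vx, vy, vz; simpl; ring.
    - transitivity (dot w q - k * dot q q); [|unfold k; field; lra].
      destruct w as [[w1 w2] w3], q as [[q1 q2] q3].
      unfold a, dot, vx, vy, vz; simpl; ring.
    - transitivity (dot w (cross p q) - k * dot q (cross p q)); [|rewrite Hwc].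
      + destruct w as [[w1 w2] w3], q as [[q1 q2] q3].
        unfold a, dot, vx, vy, vz; simpl; ring.
      + destruct p as [[p1 p2] p3], q as [[q1 q2] q3].
        unfold dot, cross, vx, vy, vz; simpl; ring. }
  assert (Haz := dot_self_eq0 a Ha z).
  transitivity (dot a z + k * dot q z); [|rewrite Haz; ring].
  destruct w as [[w1 w2] w3], q as [[q1 q2] q3], z as [[z1 z2] z3].
  unfold a, dot, vx, vy, vz; simpl; ring.
Qed.

Section Smoothness.

Variable D : R -> R -> Prop.

Lemma smooth2_pu (h : R -> R -> R) : smooth2 D h -> smooth2 D (pu h).
Proof. intros H k; exact (proj1 (proj2 (proj2 (H (S k))))). Qed.

Lemma smooth2_pv (h : R -> R -> R) : smooth2 D h -> smooth2 D (pv h).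
Proof. intros H k; exact (proj2 (proj2 (proj2 (H (S k))))). Qed.

Lemma smooth2_ex_derive_u (h : R -> R -> R) (u v : R) :
  smooth2 D h -> D u v -> ex_derive (fun t => h t v) u.
Proof. intros H Huv; exact (proj1 (proj1 (proj2 (H 1%nat)) u v Huv)). Qed.

Lemma smooth2_ex_derive_v (h : R -> R -> R) (u v : R) :
  smooth2 D h -> D u v -> ex_derive (fun t => h u t) v.
Proof. intros H Huv; exact (proj2 (proj1 (proj2 (H 1%nat)) u v Huv)). Qed.

Lemma smooth2_continuity_2d_pt (h : R -> R -> R) (u v : R) :
  smooth2 D h -> D u v -> continuity_2d_pt h u v.
Proof. intros H Huv; apply continuity_2d_pt_filterlim, (proj1 (H 0%nat) u v Huv). Qed.

Lemma smooth_surf_Su (y : surf) : smooth_surf D y -> smooth_surf D (Su y).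
Proof. intros [H1 [H2 H3]]; split; [|split]; apply smooth2_pu; assumption. Qed.

Lemma smooth_surf_Sv (y : surf) : smooth_surf D y -> smooth_surf D (Sv y).
Proof. intros [H1 [H2 H3]]; split; [|split]; apply smooth2_pv; assumption. Qed.

Lemma is_vderive_Su (y : surf) (u v : R) :
  smooth_surf D y -> D u v -> is_vderive (fun t => y t v) u (Su y u v).
Proof.
  intros [H1 [H2 H3]] Huv; split; [|split]; apply Derive_correct.
  - exact (smooth2_ex_derive_u _ u v H1 Huv).
  - exact (smooth2_ex_derive_u _ u v H2 Huv).
  - exact (smooth2_ex_derive_u _ u v H3 Huv).
Qed.

Lemma is_vderive_Sv (y : surf) (u v : R) :
  smooth_surf D y -> D u v -> is_vderive (fun t => y u t) v (Sv y u v).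
Proof.
  intros [H1 [H2 H3]] Huv; split; [|split]; apply Derive_correct.
  - exact (smooth2_ex_derive_v _ u v H1 Huv).
  - exact (smooth2_ex_derive_v _ u v H2 Huv).
  - exact (smooth2_ex_derive_v _ u v H3 Huv).
Qed.

Hypothesis HD : open2 D.

Lemma open2_locally_u (u v : R) : D u v -> locally u (fun t => D t v).
Proof.
  intros Huv; destruct (HD u v Huv) as [e [He H]].
  exists (mkposreal e He); intros t Ht; apply H; [exact Ht|].
  rewrite Rminus_eq_0, Rabs_R0; exact He.
Qed.

Lemma open2_locally_v (u v : R) : D u v -> locally v (fun t => D u t).
Proof.
  intros Huv; destruct (HD u v Huv) as [e [He H]].
  exists (mkposreal e He); intros t Ht; apply H; [|exact Ht].
  rewrite Rminus_eq_0, Rabs_R0; exact He.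
Qed.

Lemma pu_pv_comm (h : R -> R -> R) (u v : R) :
  smooth2 D h -> D u v -> pu (pv h) u v = pv (pu h) u v.
Proof.
  intros Hh Huv; apply Schwarz.
  - destruct (HD u v Huv) as [e [He HDe]].
    exists (mkposreal e He); intros a b Ha Hb; assert (Hab := HDe a b Ha Hb).
    repeat split.
    + exact (smooth2_ex_derive_u _ a b Hh Hab).
    + exact (smooth2_ex_derive_v _ a b Hh Hab).
    + exact (smooth2_ex_derive_u _ a b (smooth2_pv _ Hh) Hab).
    + exact (smooth2_ex_derive_v _ a b (smooth2_pu _ Hh) Hab).
  - exact (smooth2_continuity_2d_pt _ u v (smooth2_pu _ (smooth2_pv _ Hh)) Huv).
  - exact (smooth2_continuity_2d_pt _ u v (smooth2_pv _ (smooth2_pu _ Hh)) Huv).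
Qed.

Lemma Su_Sv_comm (y : surf) (u v : R) :
  smooth_surf D y -> D u v -> Su (Sv y) u v = Sv (Su y) u v.
Proof.
  intros [H1 [H2 H3]] Huv.
  change ((pu (pv (comp1 y)) u v, pu (pv (comp2 y)) u v, pu (pv (comp3 y)) u v) =
          (pv (pu (comp1 y)) u v, pv (pu (comp2 y)) u v, pv (pu (comp3 y)) u v)).
  rewrite (pu_pv_comm _ u v H1 Huv), (pu_pv_comm _ u v H2 Huv), (pu_pv_comm _ u v H3 Huv).
  reflexivity.
Qed.

End Smoothness.

Lemma fE_pos (D : R -> R -> Prop) (x : surf) (u v : R) :
  regular_surf D x -> D u v -> 0 < fE x u v.
Proof. intros Hreg Huv; exact (dot_self_pos_of_cross _ _ (Hreg u v Huv)). Qed.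

Lemma fG_pos (D : R -> R -> Prop) (x : surf) (u v : R) :
  regular_surf D x -> D u v -> 0 < fG x u v.
Proof.
  intros Hreg Huv; apply (dot_self_pos_of_cross _ (Su x u v)).
  rewrite vnorm_cross_comm; exact (Hreg u v Huv).
Qed.

Definition curvature_line_coords (D : R -> R -> Prop) (x : surf) : Prop :=
  forall u v, D u v -> fF x u v = 0 /\ fM x u v = 0.

Section Codazzi.

Variables (D : R -> R -> Prop) (x : surf).
Hypotheses (HD : open2 D) (Hx : smooth_surf D x) (Hreg : regular_surf D x)
  (Hcl : curvature_line_coords D x).

Variables u v : R.
Hypothesis Huv : D u v.

Lemma ex_vderive_unormal_u : exists dn, is_vderive (fun t => unormal x t v) u dn.
Proof.
  exact (ex_vderive_unit_normal _ _ _ _ _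
    (is_vderive_Su D _ u v (smooth_surf_Su D x Hx) Huv)
    (is_vderive_Su D _ u v (smooth_surf_Sv D x Hx) Huv) (Hreg u v Huv)).
Qed.

Lemma ex_vderive_unormal_v : exists dn, is_vderive (fun t => unormal x u t) v dn.
Proof.
  exact (ex_vderive_unit_normal _ _ _ _ _
    (is_vderive_Sv D _ u v (smooth_surf_Su D x Hx) Huv)
    (is_vderive_Sv D _ u v (smooth_surf_Sv D x Hx) Huv) (Hreg u v Huv)).
Qed.

Lemma is_derive_fE_v : is_derive (fun t => fE x u t) v (2 * dot (Su x u v) (Sv (Su x) u v)).
Proof.
  assert (HA := is_vderive_Sv D _ u v (smooth_surf_Su D x Hx) Huv).
  eapply is_derive_eq; [exact (is_vderive_dot _ _ _ _ _ HA HA)|].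
  rewrite (dot_comm (Sv (Su x) u v)); ring.
Qed.

Lemma unormal_vderive_v (dn : vec3) : is_vderive (fun t => unormal x u t) v dn ->
  dot dn (unormal x u v) = 0 /\ dot dn (Su x u v) = 0 /\ dot dn (Sv x u v) = - fN x u v.
Proof.
  intros Hdn.
  destruct (unit_normal_vderive _ _ _ _ _ _
    (is_vderive_Sv D _ u v (smooth_surf_Su D x Hx) Huv)
    (is_vderive_Sv D _ u v (smooth_surf_Sv D x Hx) Huv) Hdn) as (Hn & HA & HB).
  { generalize (open2_locally_v D HD u v Huv); apply filter_imp; intros t Ht; exact (Hreg u t Ht). }
  repeat split; [exact Hn | | rewrite HB; unfold fN; rewrite dot_comm; reflexivity].
  rewrite HA, dot_comm; change (- fM x u v = 0); rewrite (proj2 (Hcl u v Huv)); ring.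
Qed.

Lemma unormal_vderive_u (dn : vec3) : is_vderive (fun t => unormal x t v) u dn ->
  dot dn (unormal x u v) = 0 /\ dot dn (Su x u v) = - fL x u v /\ dot dn (Sv x u v) = 0.
Proof.
  intros Hdn.
  destruct (unit_normal_vderive _ _ _ _ _ _
    (is_vderive_Su D _ u v (smooth_surf_Su D x Hx) Huv)
    (is_vderive_Su D _ u v (smooth_surf_Sv D x Hx) Huv) Hdn) as (Hn & HA & HB).
  { generalize (open2_locally_u D HD u v Huv); apply filter_imp; intros t Ht; exact (Hreg t v Ht). }
  repeat split; [exact Hn | rewrite HA; unfold fL; rewrite dot_comm; reflexivity |].
  rewrite HB, (Su_Sv_comm D HD x u v Hx Huv), dot_comm.
  change (- fM x u v = 0); rewrite (proj2 (Hcl u v Huv)); ring.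
Qed.

(* Differentiating F = 0 in u. *)
Lemma dot_Suu_Sv : dot (Su (Su x) u v) (Sv x u v) = - dot (Su x u v) (Sv (Su x) u v).
Proof.
  assert (HA := is_vderive_Su D _ u v (smooth_surf_Su D x Hx) Huv).
  assert (HB := is_vderive_Su D _ u v (smooth_surf_Sv D x Hx) Huv).
  rewrite (Su_Sv_comm D HD x u v Hx Huv) in HB.
  enough (dot (Su (Su x) u v) (Sv x u v) + dot (Su x u v) (Sv (Su x) u v) = 0) by lra.
  apply (is_derive_locally_const _ _ _ 0 (is_vderive_dot _ _ _ _ _ HA HB)).
  generalize (open2_locally_u D HD u v Huv); apply filter_imp; intros t Ht.
  exact (proj1 (Hcl t v Ht)).
Qed.

(* n_v is tangent and orthogonal to x_u, hence parallel to x_v. *)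
Lemma dot_Suu_unormal_v (dn : vec3) : is_vderive (fun t => unormal x u t) v dn ->
  dot (Su (Su x) u v) dn = fN x u v / fG x u v * dot (Su x u v) (Sv (Su x) u v).
Proof.
  intros Hdn; destruct (unormal_vderive_v dn Hdn) as [Hn [HA HB]].
  rewrite (dot_comm _ dn), (dot_tangent_orthogonal dn (Su x u v) (Sv x u v) (Su (Su x) u v)).
  - rewrite HB, (dot_comm (Sv x u v) (Su (Su x) u v)), dot_Suu_Sv; unfold fG; field.
    exact (Rgt_not_eq _ _ (fG_pos D x u v Hreg Huv)).
  - exact (Hreg u v Huv).
  - exact (proj1 (Hcl u v Huv)).
  - exact HA.
  - exact Hn.
Qed.

(* Differentiating M = 0 in u; n_u is parallel to x_u. *)
Lemma dot_Suuv_unormal :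
  dot (Sv (Su (Su x)) u v) (unormal x u v) = fL x u v / fE x u v * dot (Su x u v) (Sv (Su x) u v).
Proof.
  destruct ex_vderive_unormal_u as [dn Hdn].
  destruct (unormal_vderive_u dn Hdn) as [Hn [HA HB]].
  assert (HAv := is_vderive_Su D _ u v (smooth_surf_Sv D _ (smooth_surf_Su D x Hx)) Huv).
  rewrite (Su_Sv_comm D HD (Su x) u v (smooth_surf_Su D x Hx) Huv) in HAv.
  assert (HMu : dot (Sv (Su (Su x)) u v) (unormal x u v) + dot (Sv (Su x) u v) dn = 0).
  { apply (is_derive_locally_const _ _ _ 0 (is_vderive_dot _ _ _ _ _ HAv Hdn)).
    generalize (open2_locally_u D HD u v Huv); apply filter_imp; intros t Ht.
    exact (proj2 (Hcl t v Ht)). }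
  rewrite (dot_comm (Sv (Su x) u v) dn),
    (dot_tangent_orthogonal dn (Sv x u v) (Su x u v) (Sv (Su x) u v)), HA in HMu.
  - assert (HE := fE_pos D x u v Hreg Huv); unfold fE in HE |- *; apply Rplus_opp_r_uniq in HMu.
    rewrite <- (Ropp_involutive (dot _ (unormal x u v))), <- HMu; field; lra.
  - rewrite vnorm_cross_comm; exact (Hreg u v Huv).
  - rewrite dot_comm; exact (proj1 (Hcl u v Huv)).
  - exact HB.
  - rewrite dot_unit_normal_comm; apply Ropp_eq_0_compat, Hn.
Qed.

Lemma is_derive_fL_v :
  is_derive (fun t => fL x u t) v
    ((fL x u v / fE x u v + fN x u v / fG x u v) * dot (Su x u v) (Sv (Su x) u v)).
Proof.
  destruct ex_vderive_unormal_v as [dn Hdn].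
  assert (HAA := is_vderive_Sv D _ u v (smooth_surf_Su D _ (smooth_surf_Su D x Hx)) Huv).
  eapply is_derive_eq; [exact (is_vderive_dot _ _ _ _ _ HAA Hdn)|].
  cbv beta; rewrite dot_Suuv_unormal, (dot_Suu_unormal_v dn Hdn); ring.
Qed.

Lemma codazzi_nu1 :
  is_derive (fun t => nu1 x u t) v ((nu2 x u v - nu1 x u v) * pv (fE x) u v / (2 * fE x u v)).
Proof.
  assert (HE := fE_pos D x u v Hreg Huv); assert (HG := fG_pos D x u v Hreg Huv).
  rewrite (is_derive_unique _ _ _ is_derive_fE_v : pv (fE x) u v = _).
  eapply is_derive_eq.
  - exact (is_derive_div _ _ _ _ _ is_derive_fL_v is_derive_fE_v (Rgt_not_eq _ _ HE)).
  - unfold nu1, nu2; field; lra.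
Qed.

End Codazzi.

Definition transpose_surf (x : surf) : surf := fun u v => x v u.

Lemma continuous_transpose (h : R -> R -> R) (a b : R) :
  continuous (fun p : R * R => h (fst p) (snd p)) (b, a) ->
  continuous (fun p : R * R => h (snd p) (fst p)) (a, b).
Proof.
  intros H; apply (continuous_comp_2 (U := prod_UniformSpace R_UniformSpace R_UniformSpace)
    snd fst h); [apply continuous_snd | apply continuous_fst | exact H].
Qed.

Lemma Ck_transpose (k : nat) (D : R -> R -> Prop) (h : R -> R -> R) :
  Ck k D h -> Ck k (fun a b => D b a) (fun a b => h b a).
Proof.
  revert D h; induction k as [|k IH]; intros D h [Hc Hk];
    (split; [intros a b Hab; exact (continuous_transpose h a b (Hc b a Hab))|]).
  - exact I.
  - destruct Hk as [Hex [Hu Hv]]; split; [|split].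
    + intros a b Hab; destruct (Hex b a Hab); split; assumption.
    + exact (IH _ _ Hv).
    + exact (IH _ _ Hu).
Qed.

Section Transpose.

Variables (D : R -> R -> Prop) (x : surf).

Let DT : R -> R -> Prop := fun a b => D b a.

Lemma open2_transpose : open2 D -> open2 DT.
Proof.
  intros HD a b Hab; destruct (HD b a Hab) as [e [He H]].
  exists e; split; [exact He|]; intros p q Hp Hq; apply H; assumption.
Qed.

Lemma smooth_surf_transpose : smooth_surf D x -> smooth_surf DT (transpose_surf x).
Proof. intros [H1 [H2 H3]]; split; [|split]; intros k; apply Ck_transpose; auto. Qed.

Lemma regular_surf_transpose : regular_surf D x -> regular_surf DT (transpose_surf x).
Proof.
  intros Hreg a b Hab; change (vnorm (cross (Sv x b a) (Su x b a)) <> 0).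
  rewrite vnorm_cross_comm; exact (Hreg b a Hab).
Qed.

Lemma curvature_line_coords_transpose :
  open2 D -> smooth_surf D x -> curvature_line_coords D x ->
  curvature_line_coords DT (transpose_surf x).
Proof.
  intros HD Hx Hcl a b Hab; destruct (Hcl b a Hab) as [HF HM]; split.
  - change (dot (Sv x b a) (Su x b a) = 0); rewrite dot_comm; exact HF.
  - change (dot (Su (Sv x) b a) (unit_normal (Sv x b a) (Su x b a)) = 0).
    rewrite (Su_Sv_comm D HD x b a Hx Hab), dot_unit_normal_comm.
    change (- fM x b a = 0); rewrite HM; ring.
Qed.

End Transpose.

Lemma nu1_transpose (x : surf) (a b : R) : nu1 (transpose_surf x) a b = - nu2 x b a.
Proof.
  change (dot (Sv (Sv x) b a) (unit_normal (Sv x b a) (Su x b a)) / fG x b a =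
    - (dot (Sv (Sv x) b a) (unit_normal (Su x b a) (Sv x b a)) / fG x b a)).
  rewrite dot_unit_normal_comm; unfold Rdiv; ring.
Qed.

Lemma nu2_transpose (x : surf) (a b : R) : nu2 (transpose_surf x) a b = - nu1 x b a.
Proof.
  change (dot (Su (Su x) b a) (unit_normal (Sv x b a) (Su x b a)) / fE x b a =
    - (dot (Su (Su x) b a) (unit_normal (Su x b a) (Sv x b a)) / fE x b a)).
  rewrite dot_unit_normal_comm; unfold Rdiv; ring.
Qed.

Lemma codazzi_nu2 (D : R -> R -> Prop) (x : surf) (u v : R) :
  open2 D -> smooth_surf D x -> regular_surf D x -> curvature_line_coords D x -> D u v ->
  is_derive (fun t => nu2 x t v) u ((nu1 x u v - nu2 x u v) * pu (fG x) u v / (2 * fG x u v)).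
Proof.
  intros HD Hx Hreg Hcl Huv.
  assert (H := codazzi_nu1 _ _ (open2_transpose D HD) (smooth_surf_transpose D x Hx)
    (regular_surf_transpose D x Hreg) (curvature_line_coords_transpose D x HD Hx Hcl) v u Huv).
  apply (is_derive_ext (fun t => -1 * nu1 (transpose_surf x) v t)).
  - intros t; change (-1 * nu1 (transpose_surf x) v t = nu2 x t v).
    rewrite nu1_transpose; ring.
  - eapply is_derive_eq; [exact (is_derive_scal _ _ (-1) _ H)|].
    rewrite nu1_transpose, nu2_transpose; change (fE (transpose_surf x) v u) with (fG x u v).
    change (pv (fE (transpose_surf x)) v u) with (pu (fG x) u v).
    field; exact (Rgt_not_eq _ _ (fG_pos D x u v Hreg Huv)).
Qed.

Lemma is_derive_ln_sqrt_exp (e P : R -> R) (t de dP : R) :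
  is_derive e t de -> 0 < e t -> is_derive P t dP ->
  is_derive (fun s => ln (sqrt (e s) * exp (P s))) t (de / (2 * e t) + dP).
Proof.
  intros He Hpos HP.
  assert (Hs := is_derive_sqrt _ _ _ He Hpos).
  assert (Hx := is_derive_comp exp P t _ _ (is_derive_exp (P t)) HP).
  assert (Hsp : 0 < sqrt (e t)) by (apply sqrt_lt_R0; exact Hpos).
  assert (Hl := is_derive_comp ln _ t _ _
    (is_derive_ln _ (Rmult_lt_0_compat _ _ Hsp (exp_pos (P t)))) (is_derive_Rmult _ _ _ _ _ Hs Hx)).
  eapply is_derive_eq; [exact Hl|].
  assert (Hss : sqrt (e t) * sqrt (e t) = e t) by (apply sqrt_sqrt; lra).
  cbv beta; repeat change (scal ?a ?b) with (a * b).
  set (s := sqrt (e t)) in *; rewrite <- Hss.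
  field; split; [lra | exact (Rgt_not_eq _ _ (exp_pos (P t)))].
Qed.

Lemma is_derive_weingarten_log (e n f g Phi : R -> R) (t de : R) :
  is_derive e t de -> 0 < e t -> ex_derive n t -> ex_derive f (n t) ->
  f (n t) - g (n t) <> 0 ->
  is_derive Phi (n t) (Derive f (n t) / (f (n t) - g (n t))) ->
  is_derive (fun s => f (n s)) t ((g (n t) - f (n t)) * de / (2 * e t)) ->
  is_derive (fun s => ln (sqrt (e s) * exp (Phi (n s)))) t 0.
Proof.
  intros He Hpos [dn Hn] [df Hf] Hfg HPhi Hcodazzi.
  assert (Hchain : dn * df = (g (n t) - f (n t)) * de / (2 * e t)).
  { rewrite <- (is_derive_unique _ _ _ Hcodazzi).
    exact (eq_sym (is_derive_unique _ _ _ (is_derive_comp f n t _ _ Hf Hn))). }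
  eapply is_derive_eq.
  - exact (is_derive_ln_sqrt_exp _ _ _ _ _ He Hpos (is_derive_comp Phi n t _ _ HPhi Hn)).
  - repeat change (scal ?a ?b) with (a * b); rewrite (is_derive_unique _ _ _ Hf).
    replace (dn * (df / (f (n t) - g (n t)))) with (dn * df / (f (n t) - g (n t))) by (field; exact Hfg).
    rewrite Hchain; field; split; [lra | exact Hfg].
Qed.

Theorem lemma4p3 (D : R -> R -> Prop) (J : R -> Prop) (x : surf)
  (f g : R -> R) (nu : R -> R -> R) (Phi Psi : R -> R) :
  open2 D -> open_interval_R J ->
  smooth_surf D x -> regular_surf D x ->
  principal_params D x -> strongly_regular D x ->
  weingarten_data D J x f g nu ->
  (forall t, J t -> is_derive Phi t (Derive f t / (f t - g t))) ->
  (forall t, J t -> is_derive Psi t (Derive g t / (g t - f t))) ->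
  (forall u v, D u v ->
     is_derive (fun t => ln (sqrt (fE x u t) * exp (Phi (nu u t)))) v 0) /\
  (forall u v, D u v ->
     is_derive (fun t => ln (sqrt (fG x t v) * exp (Psi (nu t v)))) u 0).
Proof.
  intros HD _ Hx Hreg Hpp _ [Hfg Hw] HPhi HPsi.
  assert (Hcl : curvature_line_coords D x).
  { intros u v Huv; destruct (Hpp u v Huv) as [HF [HM _]]; split; assumption. }
  split; intros u v Huv; destruct (Hw u v Huv) as (HJ & Hnu_u & Hnu_v & _ & Hf & Hg);
    destruct (Hfg _ HJ) as (Hexf & Hexg & Hfg_pos & _).
  - apply (is_derive_weingarten_log _ _ f g _ _ _
      (Derive_correct _ _ (ex_intro _ _ (is_derive_fE_v D x Hx u v Huv)))
      (fE_pos D x u v Hreg Huv) Hnu_v Hexf ltac:(lra) (HPhi _ HJ)).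
    rewrite <- Hf, <- Hg; apply (is_derive_ext_loc (fun t => nu1 x u t)).
    + generalize (open2_locally_v D HD u v Huv); apply filter_imp; intros t Ht.
      destruct (Hw u t Ht) as (_ & _ & _ & _ & Hft & _); exact Hft.
    + exact (codazzi_nu1 D x HD Hx Hreg Hcl u v Huv).
  - apply (is_derive_weingarten_log _ _ g f _ _ _
      (Derive_correct _ _ (ex_intro _ _
        (is_derive_fE_v _ (transpose_surf x) (smooth_surf_transpose D x Hx) v u Huv)))
      (fG_pos D x u v Hreg Huv) Hnu_u Hexg ltac:(lra) (HPsi _ HJ)).
    rewrite <- Hf, <- Hg; apply (is_derive_ext_loc (fun t => nu2 x t v)).
    + generalize (open2_locally_u D HD u v Huv); apply filter_imp; intros t Ht.
      destruct (Hw t v Ht) as (_ & _ & _ & _ & _ & Hgt); exact Hgt.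
    + exact (codazzi_nu2 D x u v HD Hx Hreg Hcl Huv).
Qed.
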